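(* Let $\mathbf b_i\in\mathcal B_k$ be a boundary point of $P(A)$. Let $\beta_1,\dots,\beta_{R_k+1}$ be the elements of $\{1/\ell_0,2/\ell_0,\dots,\ell_0/\ell_0\}$ not of the form $1-s_0^{(j)}/\ell_0$ with $\mathbf b_j\in\mathcal B_k$ a boundary point of $P(A)$ and $\mathbf b_j\neq\mathbf b_i$ (one may take $\beta_1=1$), and let $\alpha_1,\dots,\alpha_{R_k+1}$ be the elements remaining on the list $\frac{v^{(i)}_r+\sigma}{\ell_r}$ ($r=1,\dots,m$, $\sigma=0,\dots,\ell_r-1$) after one copy of each element $1-s_0^{(j)}/\ell_0$ with $\mathbf b_j\in\mathcal B_k$ a boundary point of $P(A)$, $\mathbf b_j\ne\mathbf b_i$, has been removed. Then the $R_k+1$ series $F^{(\mathbf b_j)}_{\mathbf b_i}(\lambda)$ with $\mathbf b_j\in\mathcal B_k$ either an interior point of $P(A)$ or equal to $\mathbf b_i$ are obtained from a full set of solutions at $x=0$ of the hypergeometric operator \[(\delta_x+\beta_1-1)\cdots(\delta_x+\beta_{R_k+1}-1)-x(\delta_x+\alpha_1)\cdots(\delta_x+\alpha_{R_k+1}),\qquad\delta_x=x\tfrac{d}{dx},\] by replacing $x$ by $\lambda^{\ell_0}$; that is, $F^{(\mathbf b_j)}_{\mathbf b_i}(\lambda)=H_j(\lambda^{\ell_0})$ where the $H_j(x)$ (formal series in $x^{s_0^{(j)}/\ell_0}\mathbb C[[x]]$) form a full set of solutions of this operator at $x=0$.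
   Context: Let $A=\{\mathbf a_1,\dots,\mathbf a_m\}\subseteq\mathbb Z^n$ be linearly independent over $\mathbb R$, $\mathbf a_0\in\mathbb Z^n$, and $\ell_0,\dots,\ell_m$ positive integers with gcd $1$, $\ell_0\mathbf a_0=\sum_{j=1}^m\ell_j\mathbf a_j$, $\ell_0=\sum_{j=1}^m\ell_j$. Let $\mathbb ZA$, $\mathbb ZA_+$ be the groups generated by $A$ and $A\cup\{\mathbf a_0\}$. Let $V$ be the real span of $A$, $V_{\mathbb Z}=V\cap\mathbb Z^n$, $P(A)=\{\sum_jc_j\mathbf a_j:0\le c_j<1\}$, $\mathcal B=V_{\mathbb Z}\cap P(A)$. Each $\mathbf b\in\mathcal B$ is written uniquely $\mathbf b=\sum_rv_r\mathbf a_r$ with $v_r\in[0,1)$; $\mathbf b$ is an interior point of $P(A)$ if all $v_r>0$ and a boundary point otherwise. Fix a coset $\mathcal C_k$ of $\mathbb ZA_+$ in $V_{\mathbb Z}$, put $\mathcal B_k=\mathcal B\cap\mathcal C_k$ (it has $\ell_0$ elements), and let $R_k$ be the number of interior points of $P(A)$ in $\mathcal B_k$. Fix $\mathbf b_i\in\mathcal B_k$. For $\mathbf b_j\in\mathcal B_k$ write $\mathbf b_j=\sum_rv^{(j)}_r\mathbf a_r$, let $s_0^{(j)}\in\{0,\dots,\ell_0-1\}$ be the unique element with $\mathbf b_i+s_0^{(j)}\mathbf a_0\equiv\mathbf b_j\pmod{\mathbb ZA}$, and let $s^{(j)}_r\in\mathbb Z$ ($r=1,\dots,m$) be determined by $\mathbf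 b_i+s_0^{(j)}\mathbf a_0=\mathbf b_j-\sum_rs^{(j)}_r\mathbf a_r$. Define \[F^{(\mathbf b_j)}_{\mathbf b_i}(\lambda)=\lambda^{s_0^{(j)}}\sum_{s=0}^\infty\frac{\prod_{r=1}^m\prod_{\sigma=0}^{\ell_r-1}\big(\frac{v^{(j)}_r-s^{(j)}_r+\sigma}{\ell_r}\big)_s}{\prod_{t=1}^{\ell_0}\big(\frac{s^{(j)}_0+t}{\ell_0}\big)_s}\lambda^{s\ell_0},\] with $(a)_s=a(a+1)\cdots(a+s-1)$. *)

From HB Require Import structures.
From mathcomp Require Import all_boot all_order all_algebra.
Set Implicit Arguments. Unset Strict Implicit. Unset Printing Implicit Defensive.
Import Order.TTheory GRing.Theory Num.Theory.
Local Open Scope ring_scope.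

Definition ratv (n : nat) (b : 'rV[int]_n) : 'rV[rat]_n :=
  map_mx (fun z : int => z%:~R) b.

Definition Amx (n m : nat) (a : 'I_m -> 'rV[int]_n) : 'M[rat]_(m, n) :=
  \matrix_(r < m) ratv (a r).

Definition inZAplus (n m : nat) (a : 'I_m -> 'rV[int]_n) (a0 : 'rV[int]_n)
  (x : 'rV[int]_n) : Prop :=
  exists (z0 : int) (z : 'I_m -> int), x = a0 *~ z0 + \sum_(r < m) a r *~ z r.

Definition PA_coords (n m : nat) (a : 'I_m -> 'rV[int]_n) (b : 'rV[int]_n)
  (v : 'I_m -> rat) : Prop :=
  ratv b = \sum_(r < m) v r *: ratv (a r) /\ forall r, 0 <= v r < 1.

Definition inB (n m : nat) (a : 'I_m -> 'rV[int]_n) (b : 'rV[int]_n) : Prop :=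
  exists v : 'I_m -> rat, PA_coords a b v.

Definition interiorb (n m : nat) (v : 'rV[int]_n -> 'I_m -> rat) (b : 'rV[int]_n)
  : bool := [forall r, 0 < v b r].

Definition poch (R : pzRingType) (x : R) (s : nat) : R := \prod_(i < s) (x + i%:R).

(* Formal power series in lambda are coefficient sequences nat -> R.
   A series H(x) in x^{e/l0} C[[x]] is identified with H(lambda^l0), i.e. with
   its coefficient sequence in powers of lambda = x^{1/l0}. *)

Definition Fcoef (R : numFieldType) (m : nat) (l : 'I_m -> nat) (l0 : nat)
  (v : 'I_m -> rat) (sr : 'I_m -> int) (s0 : nat) (s : nat) : R :=
  (\prod_(r < m) \prod_(sig < l r)
      poch ((ratr (v r) - (sr r)%:~R + sig%:R) / (l r)%:R) s)
  / \prod_(t < l0) poch (((s0 + t.+1)%:R) / l0%:R) s.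

(* F(lambda) = lambda^{s0} sum_s c_s lambda^{s l0}, as a lambda-coefficient sequence *)
Definition Fser (R : numFieldType) (m : nat) (l : 'I_m -> nat) (l0 : nat)
  (v : 'I_m -> rat) (sr : 'I_m -> int) (s0 : nat) : nat -> R :=
  fun k => if (s0 <= k)%N && (l0 %| k - s0)%N
           then Fcoef R l l0 v sr s0 ((k - s0) %/ l0)%N else 0.

(* delta_x = x d/dx acts on x^{k/l0} = lambda^k by multiplication by k/l0 *)
Definition delta_x (R : numFieldType) (l0 : nat) (f : nat -> R) : nat -> R :=
  fun k => (k%:R / l0%:R) * f k.

(* multiplication by x = lambda^l0 *)
Definition mul_x (R : numFieldType) (l0 : nat) (f : nat -> R) : nat -> R :=
  fun k => if (k < l0)%N then 0 else f (k - l0)%N.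

Definition delta_plus (R : numFieldType) (l0 : nat) (c : R) (f : nat -> R) : nat -> R :=
  fun k => delta_x l0 f k + c * f k.

Definition hyp_op (R : numFieldType) (l0 : nat) (betas alphas : seq R)
  (f : nat -> R) : nat -> R :=
  fun k => foldr (fun b g => delta_plus l0 (b - 1) g) f betas k
           - mul_x l0 (foldr (fun al g => delta_plus l0 al g) f alphas) k.

Definition removed (n m : nat) (l0 : nat) (sB : seq 'rV[int]_n)
  (v : 'rV[int]_n -> 'I_m -> rat) (s0 : 'rV[int]_n -> nat) (bi : 'rV[int]_n)
  : seq rat :=
  [seq 1 - (s0 b)%:R / l0%:R | b <- sB & ~~ interiorb v b && (b != bi)].

Definition beta_list (n m : nat) (l0 : nat) (sB : seq 'rV[int]_n)
  (v : 'rV[int]_n -> 'I_m -> rat) (s0 : 'rV[int]_n -> nat) (bi : 'rV[int]_n)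
  : seq rat :=
  [seq x <- [seq (k.+1)%:R / l0%:R | k <- iota 0 l0]
     | x \notin removed l0 sB v s0 bi].

Definition alpha_list (n m : nat) (l : 'I_m -> nat) (l0 : nat) (sB : seq 'rV[int]_n)
  (v : 'rV[int]_n -> 'I_m -> rat) (s0 : 'rV[int]_n -> nat) (bi : 'rV[int]_n)
  : seq rat :=
  foldl (fun s x => rem x s)
    (flatten [seq [seq (v bi r + sig%:R) / (l r)%:R | sig <- iota 0 (l r)]
              | r <- enum 'I_m])
    (removed l0 sB v s0 bi).

From HB Require Import structures.
From mathcomp Require Import all_boot all_order all_algebra.
From mathcomp Require Import ring zify lra.
Set Implicit Arguments.
Unset Strict Implicit.
Unset Printing Implicit Defensive.
Import Order.TTheory GRing.Theory Num.Theory.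
Local Open Scope ring_scope.

(* The elements of B_k are the points b_i + s a_0 reduced modulo Z A.  Since
   a_0 = sum_r (l_r / l_0) a_r, their coordinates are v^(i)_r + s l_r / l_0 modulo Z,
   and coprimality of l_0 with the l_r makes b_j |-> s_0^(j) a bijection from B_k
   onto {0, ..., l_0 - 1}.
   The series F^(b_j) is supported on the exponents s_0^(j) + l_0 N, on which the
   operator acts through the indicial factor prod (s_0/l_0 + beta - 1) and the
   two-term recurrence c_(q+1) prod (X + beta) = c_q prod (X + alpha),
   X = s_0/l_0 + q.  The Pochhammer quotient of consecutive coefficients of F gives
   this recurrence for the full lists {t/l_0 : 1 <= t <= l_0} and
   {(v^(i)_r + sigma)/l_r}; both contain each removed value 1 - s_0^(j)/l_0, and
   these common factors cancel.  For b_j interior or b_j = b_i the value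
   1 - s_0^(j)/l_0 is not removed, so it is a beta and provides the indicial root.
   Distinct leading exponents s_0^(j) give linear independence. *)


Lemma perm_foldl_rem (T : eqType) (s t : seq T) :
  uniq t -> {subset t <= s} -> perm_eq s (foldl (fun s x => rem x s) s t ++ t).
Proof.
elim: t s => [|x t IHt] s /=; first by rewrite cats0.
case/andP=> xNt t_uniq t_sub.
have x_s : x \in s by apply: t_sub; rewrite mem_head.
have t_sub_rem : {subset t <= rem x s}.
  move=> y y_t; apply: rem_mem; last by apply: t_sub; rewrite inE y_t orbT.
  by apply: contraNneq xNt => <-.
apply: perm_trans (perm_to_rem x_s) _.
rewrite perm_sym -cat1s perm_catCA /= perm_cons perm_sym.
exact: IHt.
Qed.

Lemma perm_filter_notin (T : eqType) (s t : seq T) :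
  uniq s -> uniq t -> {subset t <= s} -> perm_eq s ([seq x <- s | x \notin t] ++ t).
Proof.
move=> s_uniq t_uniq t_sub.
rewrite -(perm_filterC (fun x => x \notin t) s) perm_cat2l.
apply: uniq_perm; [exact: filter_uniq | exact: t_uniq |].
by move=> x; rewrite mem_filter /= negbK andb_idr //; apply: t_sub.
Qed.

Lemma poch0 (R : pzRingType) (x : R) : poch x 0 = 1.
Proof. by rewrite /poch big_ord0. Qed.

Lemma pochS (R : pzRingType) (x : R) s : poch x s.+1 = poch x s * (x + s%:R).
Proof. by rewrite /poch big_ord_recr. Qed.

Lemma poch_gt0 (R : numDomainType) (x : R) s : 0 < x -> 0 < poch x s.
Proof. by move=> x_gt0; apply: prodr_gt0 => i _; rewrite ltr_wpDr ?ler0n. Qed.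

Section Coefficients.

Variables (R : numFieldType) (m : nat) (l : 'I_m -> nat) (l0 : nat).
Variables (v : 'I_m -> rat) (sr : 'I_m -> int) (s0 : nat).

Local Notation c := (Fcoef R l l0 v sr s0).

Lemma Fcoef0 : c 0 = 1.
Proof.
rewrite /Fcoef !big1 ?invr1 ?mulr1 // => i _; rewrite ?poch0 //.
by rewrite big1 // => j _; rewrite poch0.
Qed.

Lemma Fcoef_recurrence q : (0 < l0)%N ->
  c q.+1 * \prod_(t < l0) ((s0 + t.+1)%:R / l0%:R + q%:R)
  = c q * \prod_(r < m) \prod_(sig < l r)
            ((ratr (v r) - (sr r)%:~R + sig%:R) / (l r)%:R + q%:R).
Proof.
move=> l0_gt0; rewrite /Fcoef.
have frac_gt0 (t : 'I_l0) : 0 < (s0 + t.+1)%:R / l0%:R :> R.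
  by rewrite divr_gt0 ?ltr0n ?addnS.
have den_neq0 : \prod_(t < l0) poch ((s0 + t.+1)%:R / l0%:R) q != 0 :> R.
  by rewrite gt_eqF // prodr_gt0 // => t _; apply: poch_gt0.
have step_neq0 : \prod_(t < l0) ((s0 + t.+1)%:R / l0%:R + q%:R) != 0 :> R.
  by rewrite gt_eqF // prodr_gt0 // => t _; rewrite ltr_wpDr ?ler0n.
rewrite (eq_bigr _ (fun t _ => pochS _ q)) big_split /=.
under eq_bigr do rewrite (eq_bigr _ (fun sig _ => pochS _ q)) big_split /=.
rewrite big_split /=; field.
by rewrite den_neq0 step_neq0.
Qed.

End Coefficients.

(* x^(s0/l0) * sum_q c q x^q, as a coefficient sequence in lambda = x^(1/l0). *)
Definition puiseux (R : zmodType) (l0 s0 : nat) (c : nat -> R) : nat -> R :=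
  fun k => if (s0 <= k)%N && (l0 %| k - s0)%N then c ((k - s0) %/ l0)%N else 0.

Section Puiseux.

Variables (R : zmodType) (l0 s0 : nat) (c : nat -> R).
Hypothesis s0_lt : (s0 < l0)%N.

Lemma puiseux_small k : (k < l0)%N -> puiseux l0 s0 c k = if k == s0 then c 0 else 0.
Proof.
move=> k_lt; rewrite /puiseux; case: eqP => [->|k_neq].
  by rewrite leqnn subnn dvdn0 div0n.
case: (leqP s0 k) => //= s0_le; rewrite gtnNdvd //.
  by rewrite subn_gt0 ltn_neqAle s0_le andbT eq_sym; apply/eqP.
exact: leq_ltn_trans (leq_subr _ _) k_lt.
Qed.

Lemma puiseux_addn k :
  puiseux l0 s0 c (k + l0) = puiseux l0 s0 (fun q => c q.+1) k.
Proof.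
rewrite /puiseux; case: (leqP s0 k) => [s0_le | k_lt].
  rewrite (leq_trans s0_le (leq_addr _ _)) /= addnC -addnBA // dvdn_addr //.
  case: ifP => // _.
  by rewrite divnDl // divnn (leq_ltn_trans (leq0n s0) s0_lt).
case: ifP => // /andP[_]; rewrite gtnNdvd //; lia.
Qed.

End Puiseux.

Lemma foldr_delta_plus (R : numFieldType) (T : Type) l0 (g : T -> R) (cs : seq T) f k :
  foldr (fun c h => delta_plus l0 (g c) h) f cs k
  = \prod_(c <- cs) (k%:R / l0%:R + g c) * f k.
Proof.
elim: cs => [|c cs IHcs] /=; first by rewrite big_nil mul1r.
by rewrite /delta_plus /delta_x IHcs big_cons; ring.
Qed.

Lemma hyp_opE (R : numFieldType) l0 (betas alphas : seq R) f k :
  hyp_op l0 betas alphas f k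
  = \prod_(b <- betas) (k%:R / l0%:R + (b - 1)) * f k
    - (if (k < l0)%N then 0
       else \prod_(a <- alphas) ((k - l0)%:R / l0%:R + a) * f (k - l0)%N).
Proof.
rewrite /hyp_op /mul_x (foldr_delta_plus _ (fun b => b - 1)).
by case: ifP => //; rewrite (foldr_delta_plus _ id).
Qed.

Lemma hyp_op_puiseux_eq0 (R : numFieldType) (l0 s0 : nat) (betas alphas : seq R)
    (c : nat -> R) :
  (s0 < l0)%N -> 1 - s0%:R / l0%:R \in betas ->
  (forall q, \prod_(b <- betas) (s0%:R / l0%:R + q%:R + b) * c q.+1
             = \prod_(a <- alphas) (s0%:R / l0%:R + q%:R + a) * c q) ->
  hyp_op l0 betas alphas (puiseux l0 s0 c) =1 (fun _ => 0).
Proof.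
move=> s0_lt root recurrence k; rewrite hyp_opE.
have l0_neq0 : l0%:R != 0 :> R by rewrite pnatr_eq0 -lt0n (leq_ltn_trans _ s0_lt).
case: (ltnP k l0) => [k_lt | l0_le].
  rewrite subr0 puiseux_small //; case: eqP => [->|_]; last by rewrite mulr0.
  rewrite (big_rem _ root) /=.
  have -> : s0%:R / l0%:R + (1 - s0%:R / l0%:R - 1) = 0 :> R by ring.
  by rewrite !mul0r.
have [k' ->] : exists k', k = (k' + l0)%N by exists (k - l0)%N; rewrite subnK.
rewrite addnK puiseux_addn // /puiseux.
case: ifP => [/andP[s0_le /dvdnP[q k'E]] | _]; last by rewrite !mulr0 subrr.
have -> : k' = (s0 + q * l0)%N by rewrite -k'E subnKC.
rewrite addKn mulnK ?(leq_ltn_trans _ s0_lt) //.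
pose X := s0%:R / l0%:R + q%:R : R.
have -> : \prod_(b <- betas) ((s0 + q * l0 + l0)%:R / l0%:R + (b - 1))
          = \prod_(b <- betas) (X + b).
  by apply: eq_bigr => b _; rewrite /X !natrD natrM; field.
have -> : \prod_(a <- alphas) ((s0 + q * l0)%:R / l0%:R + a)
          = \prod_(a <- alphas) (X + a).
  by apply: eq_bigr => a _; rewrite /X natrD natrM; field.
by rewrite recurrence subrr.
Qed.

Lemma puiseux_lin_indep (R : pzRingType) (I : eqType) (l0 : nat) (s : seq I)
    (e : I -> nat) (c : I -> nat -> R) (w : I -> R) :
  uniq s -> {in s &, injective e} -> {in s, forall i, e i < l0}%N ->
  {in s, forall i, c i 0 = 1} ->
  (forall k, \sum_(i <- s) w i * puiseux l0 (e i) (c i) k = 0) ->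
  {in s, forall i, w i = 0}.
Proof.
move=> s_uniq e_inj e_lt c0 vanish i i_s.
have := vanish (e i); rewrite (big_rem i i_s) big1_seq /=.
  by rewrite addr0 puiseux_small ?e_lt // eqxx c0 // mulr1.
move=> j; rewrite mem_rem_uniq // inE => /andP[j_neq j_s].
rewrite puiseux_small ?e_lt // eq_sym.
case: eqP => [/e_inj eij|]; last by rewrite mulr0.
by rewrite eij ?eqxx in j_neq.
Qed.

Section Weights.

Variables (m : nat) (l : 'I_m -> nat) (l0 : nat).
Hypothesis l0_gt0 : (0 < l0)%N.
Hypothesis l_coprime : gcdn l0 (\big[gcdn/0%N]_(r < m) l r) = 1%N.

Lemma dvdn_of_dvdn_mul_weights d : (forall r, l0 %| d * l r)%N -> (l0 %| d)%N.
Proof.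
move=> dvd_dl; rewrite -(@Gauss_dvdl _ _ (\big[gcdn/0%N]_(r < m) l r)) /coprime ?l_coprime //.
elim/big_ind: _ => [|x y|r _]; rewrite ?muln0 ?dvdn0 ?muln_gcdr ?dvdn_gcd //.
by move=> -> ->.
Qed.

Lemma eq_of_weighted_diff_int (s t : nat) : (s < l0)%N -> (t < l0)%N ->
  (forall r, (s%:R - t%:R) * (l r)%:R / l0%:R \is a @Num.int rat) -> s = t.
Proof.
wlog le_ts : s t / (t <= s)%N => [hwlog s_lt t_lt diff_int|].
  case: (leqP t s) => [le_ts | /ltnW le_st]; first exact: hwlog.
  apply/esym/hwlog => // r; rewrite -opprB mulNr mulNr rpredN; exact: diff_int.
move=> s_lt t_lt diff_int.
case: (posnP (s - t)) => [|st_gt0]; first lia.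
suff : (l0 %| s - t)%N by rewrite gtnNdvd //; lia.
apply: dvdn_of_dvdn_mul_weights => r.
have /intrP[z zE] := diff_int r.
have l0_neq0 : l0%:R != 0 :> rat by rewrite pnatr_eq0 -lt0n.
have : ((s - t) * l r)%N%:R = (z * l0%:Z)%:~R :> rat.
  by rewrite !rmorphM /= -zE natrB //; field.
move/(@intr_inj rat ((s - t) * l r)%N) => /(congr1 absz); rewrite abszM absz_nat => ->.
exact: dvdn_mull.
Qed.

End Weights.

HB.instance Definition _ n := GRing.Additive.copy (@ratv n) (map_mx intr).

Lemma ratv_inj n : injective (@ratv n).
Proof. by move=> x y /rowP xy; apply/rowP => j; have := xy j; rewrite !mxE => /intr_inj. Qed.

Lemma eq_of_int_diff (R : archiRealDomainType) (x y : R) :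
  0 <= x < 1 -> 0 <= y < 1 -> x - y \is a Num.int -> x = y.
Proof.
move=> /andP[x_ge0 x_lt1] /andP[y_ge0 y_lt1] /intrP[z zE].
suff z0 : z = 0 by apply/eqP; rewrite -subr_eq0 zE z0.
have : (-1 < z < 1)%R by rewrite -!(ltr_int R) rmorphN /= -zE; apply/andP; split; lra.
lia.
Qed.

Section Lattice.

Variables (n m : nat) (a : 'I_m -> 'rV[int]_n) (a0 : 'rV[int]_n).
Variables (l : 'I_m -> nat) (l0 : nat).
Hypothesis A_free : row_free (Amx a).
Hypothesis l_gt0 : forall r, (0 < l r)%N.
Hypothesis l0_gt0 : (0 < l0)%N.
Hypothesis l_coprime : gcdn l0 (\big[gcdn/0%N]_(r < m) l r) = 1%N.
Hypothesis a0_rel : a0 *+ l0 = \sum_(r < m) a r *+ l r.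
Hypothesis l0_sum : l0 = (\sum_(r < m) l r)%N.

Variables (bi : 'rV[int]_n) (sB : seq 'rV[int]_n).
Hypothesis sB_uniq : uniq sB.
Hypothesis mem_sB : forall b, b \in sB <-> (inB a b /\ inZAplus a a0 (b - bi)).
Hypothesis bi_sB : bi \in sB.

Variables (v : 'rV[int]_n -> 'I_m -> rat) (s0 : 'rV[int]_n -> nat).
Variable sr : 'rV[int]_n -> 'I_m -> int.
Hypothesis v_coords : forall b, b \in sB -> PA_coords a b (v b).
Hypothesis s0_lt : forall b, b \in sB -> (s0 b < l0)%N.
Hypothesis s0_sr : forall b, b \in sB ->
  bi + a0 *+ s0 b = b - \sum_(r < m) a r *~ sr b r.
Hypothesis bi_boundary : ~~ interiorb v bi.

Let l0_neq0 : l0%:R != 0 :> rat.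
Proof. by rewrite pnatr_eq0 -lt0n. Qed.

Lemma combination_inj (x y : 'I_m -> rat) :
  \sum_r x r *: ratv (a r) = \sum_r y r *: ratv (a r) -> x =1 y.
Proof.
have combE z : \sum_r z r *: ratv (a r) = \row_r z r *m Amx a.
  by apply/rowP => j; rewrite !mxE summxE; apply: eq_bigr => r _; rewrite !mxE.
by rewrite !combE => /(row_free_inj A_free)/rowP xy r; have := xy r; rewrite !mxE.
Qed.

Lemma ratv_a0 : ratv a0 = \sum_r ((l r)%:R / l0%:R) *: ratv (a r).
Proof.
apply: (scalerI l0_neq0).
rewrite scaler_nat -raddfMn a0_rel raddf_sum scaler_sumr; apply: eq_bigr => r _.
by rewrite raddfMn -scaler_nat scalerA mulrCA divff ?mulr1.
Qed.

Lemma ratv_translate (s : nat) (z : 'I_m -> int) :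
  ratv (bi + a0 *+ s + \sum_r a r *~ z r)
  = \sum_r (v bi r + s%:R * (l r)%:R / l0%:R + (z r)%:~R) *: ratv (a r).
Proof.
rewrite !raddfD /= (proj1 (v_coords bi_sB)) raddfMn /= ratv_a0 -scaler_nat scaler_sumr.
rewrite raddf_sum -!big_split /=; apply: eq_bigr => r _.
by rewrite raddfMz -scaler_int scalerA -!scalerDl mulrA.
Qed.

Lemma coord_shift b : b \in sB -> forall r,
  v b r = v bi r + (s0 b)%:R * (l r)%:R / l0%:R + (sr b r)%:~R.
Proof.
move=> b_sB; apply: combination_inj.
by rewrite -ratv_translate s0_sr // subrK (proj1 (v_coords b_sB)).
Qed.

Lemma s0_inj : {in sB &, injective s0}.
Proof.
move=> b b' b_sB b'_sB s0E; apply: ratv_inj.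
rewrite (proj1 (v_coords b_sB)) (proj1 (v_coords b'_sB)).
apply: eq_bigr => r _; congr (_ *: _).
have [_ /(_ r) vb] := v_coords b_sB; have [_ /(_ r) vb'] := v_coords b'_sB.
apply: eq_of_int_diff => //.
rewrite (coord_shift b_sB) (coord_shift b'_sB) s0E.
by rewrite (_ : _ - _ = (sr b r - sr b' r)%:~R) ?intr_int // rmorphB /=; ring.
Qed.

Lemma s0_bi : s0 bi = 0%N.
Proof.
apply: (eq_of_weighted_diff_int l0_gt0 l_coprime (s0_lt bi_sB) l0_gt0) => r.
have := coord_shift bi_sB r; rewrite subr0 => vbiE.
by rewrite (_ : _ / _ = (- sr bi r)%:~R) ?intr_int // rmorphN /=; lra.
Qed.

Lemma s0_surj s : (s < l0)%N -> exists2 b, b \in sB & s0 b = s.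
Proof.
move=> s_lt0.
pose w r := v bi r + s%:R * (l r)%:R / l0%:R.
pose fl r := Num.floor (w r).
pose b := bi + a0 *+ s + \sum_r a r *~ (- fl r).
have b_coords : PA_coords a b (fun r => w r - (fl r)%:~R).
  split => [|r]; first by rewrite ratv_translate; apply: eq_bigr => r _; rewrite rmorphN.
  by have := floor_itv (w r); rewrite rmorphD /=; lra.
have b_sB : b \in sB.
  apply/mem_sB; split; first by exists (fun r => w r - (fl r)%:~R).
  by exists s%:Z, (fun r => - fl r); rewrite /b addrAC (addrAC bi) subrr add0r.
exists b => //; apply/esym.
apply: (eq_of_weighted_diff_int l0_gt0 l_coprime s_lt0 (s0_lt b_sB)) => r.
have vbE : v b =1 (fun r => w r - (fl r)%:~R).
  by apply: combination_inj; rewrite -(proj1 (v_coords b_sB)); exact: (proj1 b_coords).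
have := coord_shift b_sB r; rewrite vbE /w => vb_shift.
by rewrite (_ : _ / _ = (fl r + sr b r)%:~R) ?intr_int // rmorphD /= !mulrBl; lra.
Qed.

Lemma size_sB : size sB = l0.
Proof.
have s0_perm : perm_eq (map s0 sB) (iota 0 l0).
  apply: uniq_perm; [by rewrite map_inj_in_uniq //; exact: s0_inj | exact: iota_uniq |].
  move=> s; rewrite mem_iota add0n /=; apply/mapP/idP => [[b b_sB ->]|]; first exact: s0_lt.
  by case/s0_surj=> b b_sB <-; exists b.
by rewrite -(size_map s0) (perm_size s0_perm) size_iota.
Qed.

Local Notation sel := [seq b <- sB | interiorb v b || (b == bi)].
Local Notation rmv := (removed l0 sB v s0 bi).
Local Notation fracs := [seq (k.+1)%:R / l0%:R : rat | k <- iota 0 l0].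
Local Notation shifts := (flatten [seq [seq (v bi r + sig%:R) / (l r)%:R
                                         | sig <- iota 0 (l r)] | r <- enum 'I_m]).

Lemma size_sel : size sel = (count (interiorb v) sB).+1.
Proof.
have := count_predUI (interiorb v) (pred1 bi) sB.
rewrite (count_uniq_mem bi sB_uniq) bi_sB (@eq_count _ (predI _ _) pred0) ?count_pred0.
  by rewrite addn0 addn1 size_filter => <-.
by move=> b /=; case: eqP => [->|_]; rewrite ?andbF // (negPf bi_boundary).
Qed.

Lemma size_sel_removed : (size sel + size rmv)%N = l0.
Proof.
rewrite size_map !size_filter -size_sB -(count_predC (fun b => interiorb v b || (b == bi))).
by congr addn; apply: eq_count => b /=; rewrite negb_or.
Qed.

Lemma one_sub_frac_inj : injective (fun s : nat => 1 - s%:R / l0%:R : rat).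
Proof.
by move=> s t /addrI/oppr_inj/(mulIf (invr_neq0 l0_neq0))/eqP; rewrite eqr_nat => /eqP.
Qed.

Lemma one_sub_frac_in_fracs s : (s < l0)%N -> 1 - s%:R / l0%:R \in fracs.
Proof.
move=> s_lt0; apply/mapP; exists (l0 - s).-1; first by rewrite mem_iota; lia.
by rewrite prednK ?subn_gt0 // natrB ?(ltnW s_lt0) //; field.
Qed.

Lemma fracs_uniq : uniq fracs.
Proof.
rewrite map_inj_uniq ?iota_uniq // => i j /(mulIf (invr_neq0 l0_neq0))/eqP.
by rewrite eqr_nat eqSS => /eqP.
Qed.

Lemma removed_uniq : uniq rmv.
Proof.
rewrite map_inj_in_uniq ?filter_uniq // => b b'.
rewrite !mem_filter => /andP[_ b_sB] /andP[_ b'_sB] /one_sub_frac_inj.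
exact: s0_inj.
Qed.

Lemma removed_sub_fracs : {subset rmv <= fracs}.
Proof.
move=> x /mapP[b]; rewrite mem_filter => /andP[_ b_sB] ->.
exact/one_sub_frac_in_fracs/s0_lt.
Qed.

Lemma boundary_coord_eq0 b : b \in sB -> ~~ interiorb v b -> exists r, v b r = 0.
Proof.
move=> b_sB; rewrite /interiorb negb_forall => /existsP[r]; rewrite -leNgt => vb_le0.
by exists r; apply/eqP; rewrite eq_le vb_le0; have [_ /(_ r)/andP[]] := v_coords b_sB.
Qed.

Lemma removed_sub_shifts : {subset rmv <= shifts}.
Proof.
move=> x /mapP[b]; rewrite mem_filter => /andP[/andP[b_bd b_neq] b_sB] ->.
(* A vanishing coordinate v_r^(j) makes -s_r^(j) = v^(i)_r + s_0^(j) l_r / l_0 an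
   integer N in (0, l_r], and then 1 - s_0^(j)/l_0 = (v^(i)_r + (l_r - N)) / l_r. *)
have [r vb0] := boundary_coord_eq0 b_sB b_bd.
have [_ /(_ r)/andP[vbi_ge0 vbi_lt1]] := v_coords bi_sB.
have lr_neq0 : (l r)%:R != 0 :> rat by rewrite pnatr_eq0 -lt0n.
set y : rat := (s0 b)%:R / l0%:R.
have y_ge0 : 0 <= y by rewrite divr_ge0 ?ler0n.
have y_lt1 : y < 1 by rewrite ltr_pdivrMr ?ltr0n // mul1r ltr_nat s0_lt.
have ylr_ge0 : 0 <= y * (l r)%:R by rewrite mulr_ge0 ?ler0n.
have ylr_le : y * (l r)%:R <= (l r)%:R by rewrite ler_piMl ?ler0n // ltW.
have srE : - (sr b r)%:~R = v bi r + y * (l r)%:R.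
  by have := coord_shift b_sB r; rewrite vb0 /y mulrAC; lra.
have [N NE] : exists N : nat, sr b r = - N%:Z.
  by exists `|sr b r|%N; rewrite lez0_abs ?opprK // -(ler_int rat); lra.
have {}srE : (N%:R : rat) = v bi r + y * (l r)%:R.
  by rewrite -srE NE rmorphN opprK /= -pmulrn.
have N_le : (N <= l r)%N by rewrite -ltnS -(ltr_nat rat) -addn1 natrD srE; lra.
have N_gt0 : (0 < N)%N.
  rewrite lt0n; apply: contra b_neq => /eqP N0; apply/eqP/s0_inj => //; rewrite s0_bi.
  have : y * (l r)%:R = 0 by move: srE; rewrite N0; lra.
  move/eqP; rewrite mulf_eq0 (negPf lr_neq0) orbF mulf_eq0 invr_eq0 (negPf l0_neq0).
  by rewrite orbF pnatr_eq0 => /eqP.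
apply/flattenP; exists [seq (v bi r + sig%:R) / (l r)%:R | sig <- iota 0 (l r)].
  by apply: map_f; rewrite mem_enum.
apply/mapP; exists (l r - N)%N; first by rewrite mem_iota add0n ltn_subrL N_gt0 l_gt0.
by rewrite natrB // srE; field.
Qed.

Lemma perm_beta_list : perm_eq fracs (beta_list l0 sB v s0 bi ++ rmv).
Proof. exact: perm_filter_notin fracs_uniq removed_uniq removed_sub_fracs. Qed.

Lemma perm_alpha_list : perm_eq shifts (alpha_list l l0 sB v s0 bi ++ rmv).
Proof. exact: perm_foldl_rem removed_uniq removed_sub_shifts. Qed.

Lemma size_beta_list : size (beta_list l0 sB v s0 bi) = size sel.
Proof.
apply/(@addIn (size rmv)); rewrite size_sel_removed -size_cat.
by rewrite -(perm_size perm_beta_list) size_map size_iota.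
Qed.

Lemma size_alpha_list : size (alpha_list l l0 sB v s0 bi) = size sel.
Proof.
apply/(@addIn (size rmv)); rewrite size_sel_removed -size_cat -(perm_size perm_alpha_list).
rewrite size_flatten /shape -map_comp sumnE big_map big_enum /= l0_sum.
by apply: eq_bigr => r _; rewrite /= size_map size_iota.
Qed.

Lemma one_sub_s0_in_beta_list b : b \in sel ->
  1 - (s0 b)%:R / l0%:R \in beta_list l0 sB v s0 bi.
Proof.
rewrite mem_filter => /andP[b_sel b_sB]; rewrite mem_filter.
rewrite one_sub_frac_in_fracs ?s0_lt // andbT.
apply/mapP => -[b']; rewrite mem_filter => /andP[/andP[b'_bd b'_neq] b'_sB].
move/one_sub_frac_inj/s0_inj => b_eq; rewrite -b_eq // in b'_bd b'_neq.
by rewrite (negPf b'_bd) (negPf b'_neq) in b_sel.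
Qed.

Section Series.

Variable R : numFieldType.

Local Notation c b := (Fcoef R l l0 (v b) (sr b) (s0 b)).

Lemma Fcoef_hyp_recurrence b q : b \in sB ->
  \prod_(x <- map ratr (beta_list l0 sB v s0 bi)) ((s0 b)%:R / l0%:R + q%:R + x) * c b q.+1
  = \prod_(x <- map ratr (alpha_list l l0 sB v s0 bi)) ((s0 b)%:R / l0%:R + q%:R + x)
    * c b q.
Proof.
move=> b_sB; set X : R := _ + q%:R.
have l0R_neq0 : l0%:R != 0 :> R by rewrite pnatr_eq0 -lt0n.
have X_ge0 : 0 <= X by rewrite addr_ge0 ?divr_ge0 ?ler0n.
have fracsE : \prod_(t < l0) ((s0 b + t.+1)%:R / l0%:R + q%:R)
              = \prod_(x <- fracs) (X + ratr x).
  rewrite big_map -[X in iota 0 X]subn0 -/(index_iota 0 l0) big_mkord.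
  by apply: eq_bigr => t _; rewrite fmorph_div /= !ratr_nat natrD /X; field.
have shiftsE : \prod_(r < m) \prod_(sig < l r)
                 ((ratr (v b r) - (sr b r)%:~R + sig%:R) / (l r)%:R + q%:R)
               = \prod_(x <- shifts) (X + ratr x).
  rewrite big_flatten big_map big_enum /=; apply: eq_bigr => r _.
  rewrite big_map -[X in iota 0 X]subn0 -/(index_iota 0 (l r)) big_mkord.
  apply: eq_bigr => sig _; have lrR_neq0 : (l r)%:R != 0 :> R by rewrite pnatr_eq0 -lt0n.
  rewrite (coord_shift b_sB) !(fmorph_div, rmorphD, rmorphM) /= !ratr_nat ratr_int /X.
  by field; rewrite lrR_neq0 l0R_neq0.
have rmv_gt0 : 0 < \prod_(x <- rmv) (X + ratr x).
  rewrite big_seq; apply: prodr_gt0 => x /removed_sub_fracs /mapP[k _ ->].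
  by rewrite ltr_wpDl // ltr0q divr_gt0 ?ltr0n.
have betasE : \prod_(x <- fracs) (X + ratr x)
    = \prod_(x <- beta_list l0 sB v s0 bi) (X + ratr x) * \prod_(x <- rmv) (X + ratr x).
  by rewrite (perm_big _ perm_beta_list) big_cat.
have alphasE : \prod_(x <- shifts) (X + ratr x)
    = \prod_(x <- alpha_list l l0 sB v s0 bi) (X + ratr x) * \prod_(x <- rmv) (X + ratr x).
  by rewrite (perm_big _ perm_alpha_list) big_cat.
have recurrence := Fcoef_recurrence R l (v b) (sr b) (s0 b) q l0_gt0.
rewrite fracsE shiftsE betasE alphasE [LHS]mulrA [RHS]mulrA in recurrence.
by rewrite !big_map mulrC (mulIf (lt0r_neq0 rmv_gt0) recurrence) mulrC.
Qed.

Lemma hyp_op_Fser_eq0 b : b \in sel ->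
  hyp_op l0 (map ratr (beta_list l0 sB v s0 bi)) (map ratr (alpha_list l l0 sB v s0 bi))
    (Fser R l l0 (v b) (sr b) (s0 b)) =1 (fun _ => 0).
Proof.
move=> b_sel; have b_sB : b \in sB by move: b_sel; rewrite mem_filter => /andP[].
apply: hyp_op_puiseux_eq0; first exact: s0_lt.
  have := map_f (@ratr R) (one_sub_s0_in_beta_list b_sel).
  by rewrite rmorphB rmorph1 fmorph_div /= !ratr_nat.
by move=> q; apply: Fcoef_hyp_recurrence.
Qed.

Lemma Fser_lin_indep (w : 'rV[int]_n -> R) :
  (forall k, \sum_(b <- sel) w b * Fser R l l0 (v b) (sr b) (s0 b) k = 0) ->
  {in sel, forall b, w b = 0}.
Proof.
have sel_sB : {subset sel <= sB} by move=> b; rewrite mem_filter => /andP[].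
apply: (@puiseux_lin_indep _ _ l0 _ s0 (fun b => Fcoef R l l0 (v b) (sr b) (s0 b)))
  => [|b b' /sel_sB b_sB /sel_sB b'_sB|b /sel_sB b_sB|b _].
- exact: filter_uniq.
- exact: s0_inj.
- exact: s0_lt.
- exact: Fcoef0.
Qed.

End Series.

End Lattice.

Theorem theorem6p18 (R : numClosedFieldType) (n m : nat)
  (a : 'I_m -> 'rV[int]_n) (a0 : 'rV[int]_n) (l : 'I_m -> nat) (l0 : nat)
  (* A linearly independent *)
  (hA : row_free (Amx a))
  (hl : forall r, (0 < l r)%N) (hl0 : (0 < l0)%N)
  (hgcd : gcdn l0 (\big[gcdn/0%N]_(r < m) l r) = 1%N)
  (hrel : a0 *+ l0 = \sum_(r < m) a r *+ l r)
  (hsum : l0 = (\sum_(r < m) l r)%N)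
  (* b_i, and an enumeration sB of B_k = B /\ (b_i + Z A_+) *)
  (bi : 'rV[int]_n) (sB : seq 'rV[int]_n)
  (hsBuniq : uniq sB)
  (hsB : forall b, b \in sB <-> (inB a b /\ inZAplus a a0 (b - bi)))
  (hbi : bi \in sB)
  (* coordinates v^{(j)}, s_0^{(j)}, s_r^{(j)} of the elements of B_k *)
  (v : 'rV[int]_n -> 'I_m -> rat) (s0 : 'rV[int]_n -> nat)
  (sr : 'rV[int]_n -> 'I_m -> int)
  (hv : forall b, b \in sB -> PA_coords a b (v b))
  (hs0 : forall b, b \in sB -> (s0 b < l0)%N)
  (hsr : forall b, b \in sB ->
           bi + a0 *+ s0 b = b - \sum_(r < m) a r *~ sr b r)
  (* b_i is a boundary point *)
  (hbound : ~~ interiorb v bi) :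
  let Rk := count (interiorb v) sB in
  let betas := beta_list l0 sB v s0 bi in
  let alphas := alpha_list l l0 sB v s0 bi in
  let sel := [seq b <- sB | interiorb v b || (b == bi)] in
  let F := fun b => Fser R l l0 (v b) (sr b) (s0 b) in
  [/\ size betas = Rk.+1, size alphas = Rk.+1, size sel = Rk.+1,
      (forall b, b \in sel ->
         hyp_op l0 (map ratr betas) (map ratr alphas) (F b) =1 (fun _ => 0))
    & (forall c : 'rV[int]_n -> R,
         (forall k, \sum_(b <- sel) c b * F b k = 0) ->
         forall b, b \in sel -> c b = 0)].

Proof.
move=> Rk betas alphas sel F.
have sel_size : size sel = Rk.+1 := size_sel hsBuniq hbi hbound.
split.
- rewrite -sel_size.
  exact: (size_beta_list hA hl0 hgcd hrel hsum hsBuniq hsB hbi hv hs0 hsr hbound).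
- rewrite -sel_size.
  exact: (size_alpha_list hA hl hl0 hgcd hrel hsum hsBuniq hsB hbi hv hs0 hsr).
- exact: sel_size.
- exact: (hyp_op_Fser_eq0 hA hl hl0 hgcd hrel hsum hsBuniq hbi hv hs0 hsr hbound).
- exact: (Fser_lin_indep hA hl0 hrel hsBuniq hbi hv hs0 hsr).
Qed.
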